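(* Let $k$ be a field, $A=k[\![x,y]\!]$, and $\mathfrak m=(x,y)$. Then $\Phi=\operatorname{Spec} A\setminus\{\mathfrak m\}$ is not a coherent subset of $\operatorname{Spec} A$.
   Context: $\operatorname{Ass} M$ is the set of associated primes of $M$. For $\Phi\subseteq\operatorname{Spec} A$, $\operatorname{Inj}_\Phi A$ is the full subcategory of injective $A$-modules $I$ with $\operatorname{Ass} I\subseteq\Phi$; $\Phi$ is coherent if every homomorphism $I^0\to I^1$ in $\operatorname{Inj}_\Phi A$ can be completed to an exact sequence $I^0\to I^1\to I^2$ with $I^2\in\operatorname{Inj}_\Phi A$. *)

From HB Require Import structures.
From mathcomp Require Import all_boot all_order all_algebra.
Set Implicit Arguments. Unset Strict Implicit. Unset Printing Implicit Defensive.
Import GRing.Theory.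
Local Open Scope ring_scope.

(* The ring A = k[[x,y]] of formal power series in two variables:
   a series is its coefficient function (i, j) |-> coefficient of x^i y^j. *)
Definition pser (k : fieldType) := nat -> nat -> k.

Section PowerSeries.
Variable k : fieldType.
Definition padd (f g : pser k) : pser k := fun i j => f i j + g i j.
Definition popp (f : pser k) : pser k := fun i j => - f i j.
Definition pzero : pser k := fun _ _ => 0.
Definition pone : pser k := fun i j => if (i == 0%N) && (j == 0%N) then 1 else 0.
Definition pmul (f g : pser k) : pser k := fun i j =>
  \sum_(a < i.+1) \sum_(b < j.+1) f a b * g (i - a)%N (j - b)%N.
Definition px : pser k := fun i j => if (i == 1%N) && (j == 0%N) then 1 else 0.
Definition py : pser k := fun i j => if (i == 0%N) && (j == 1%N) then 1 else 0.

Definition is_ideal (P : pser k -> Prop) : Prop :=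
  P pzero /\ (forall f g, P f -> P g -> P (padd f g)) /\ (forall f, P f -> P (popp f))
  /\ (forall a f, P f -> P (pmul a f)).
Definition prime_ideal (P : pser k -> Prop) : Prop :=
  is_ideal P /\ ~ P pone /\ (forall a b, P (pmul a b) -> P a \/ P b).
Definition maxideal : pser k -> Prop :=
  fun f => exists g h, f = padd (pmul px g) (pmul py h).
Definition same_pred (P Q : pser k -> Prop) : Prop := forall f, P f <-> Q f.
Definition Phi_punctured : (pser k -> Prop) -> Prop :=
  fun P => prime_ideal P /\ ~ same_pred P maxideal.
End PowerSeries.

Record pmodule (k : fieldType) := PModule {
  pcarrier :> zmodType;
  pact : pser k -> pcarrier -> pcarrier;
  pact1 : forall m, pact (pone k) m = m;
  pactM : forall a b m, pact (pmul a b) m = pact a (pact b m);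
  pactDl : forall a b m, pact (padd a b) m = pact a m + pact b m;
  pactDr : forall a m n, pact a (m + n) = pact a m + pact a n
}.

Section Modules.
Variable k : fieldType.

Definition is_hom (M N : pmodule k) (f : M -> N) : Prop :=
  (forall u v, f (u + v) = f u + f v) /\
  (forall a u, f (pact a u) = pact a (f u)).

Definition injective_module (I : pmodule k) : Prop :=
  forall (N N' : pmodule k) (i : N -> N') (h : N -> I),
    is_hom i -> injective i -> is_hom h ->
    exists h' : N' -> I, is_hom h' /\ forall n, h' (i n) = h n.

Definition Ass (M : pmodule k) (P : pser k -> Prop) : Prop :=
  prime_ideal P /\ exists m : M, forall a, P a <-> pact a m = 0.

Definition in_Inj (Phi : (pser k -> Prop) -> Prop) (I : pmodule k) : Prop :=
  injective_module I /\ forall P, Ass I P -> Phi P.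

Definition coherent (Phi : (pser k -> Prop) -> Prop) : Prop :=
  forall (I0 I1 : pmodule k) (f : I0 -> I1),
    in_Inj Phi I0 -> in_Inj Phi I1 -> is_hom f ->
    exists (I2 : pmodule k) (g : I1 -> I2),
      in_Inj Phi I2 /\ is_hom g /\
      forall u : I1, g u = 0 <-> exists v : I0, f v = u.
End Modules.

From HB Require Import structures.
From mathcomp Require Import all_boot all_order all_algebra.
From mathcomp Require Import boolp classical_sets.
From mathcomp Require Import ring zify.
Set Implicit Arguments. Unset Strict Implicit. Unset Printing Implicit Defensive.
Import GRing.Theory.
Local Open Scope ring_scope.

(* Write A = k[[x,y]], m = (x,y), and J s for the k-dual Hom_k(A_s, k) of a
   localization. Such a dual is injective, and when x or y acts invertibly on it
   (s = xy, x, y) no nonzero element is killed by m, so all its associated primes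
   lie in Spec A \ {m}. The map f : J(xy) -> J(x) x J(y) dual to A_x (+) A_y -> A_xy
   has no cokernel with that property: u = (a/x^m |-> coefficient of x^m y^0 in a, 0)
   is not in the image of f, while x u and y u are. Hence for any g : J(x) x J(y) -> I
   with kernel the image of f, g u is a nonzero element annihilated by m, and m is
   associated to I.
   Injectivity of J s is proved directly: an A-linear map N -> J s is a compatible
   family of k-linear functionals on N indexed by the powers of s, and such a family
   extends along an inclusion N -> N' one index at a time by linear algebra. *)

Section AdditiveMaps.
Variables (U V : zmodType) (f : U -> V).
Hypothesis fD : {morph f : x y / x + y}.

Lemma additive_morph0 : f 0 = 0.
Proof. by have := fD 0 0; rewrite addr0 => /(congr1 (+%R^~ (- f 0))); rewrite addrK subrr. Qed.

Lemma additive_morphN x : f (- x) = - f x.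
Proof. by apply/eqP; rewrite -addr_eq0 -fD addNr additive_morph0. Qed.
End AdditiveMaps.

Lemma dependent_choice_nat (T : Type) (P : nat -> T -> Prop) (R : T -> T -> Prop) :
  (exists x, P 0%N x) -> (forall m x, P m x -> exists2 y, P m.+1 y & R x y) ->
  exists f : nat -> T, forall m, P m (f m) /\ R (f m) (f m.+1).
Proof.
move=> [x0 Px0] step.
have /choice [g Hg] : forall mx : nat * T, exists y, P mx.1 mx.2 -> P mx.1.+1 y /\ R mx.2 y.
  move=> [m x]; have [/step [y Py Rxy]|nPx] := pselect (P m x).
    by exists y.
  by exists x => /nPx.
pose f := fix f m := if m is m'.+1 then g (m', f m') else x0.
have Pf m : P m (f m) by elim: m => // m IH; exact: (Hg (m, f m) IH).1.
by exists f => m; split; [exact: Pf | exact: (Hg (m, f m) (Pf m)).2].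
Qed.

Section Truncation.
Variable k : fieldType.
Local Notation poly2 := {poly {poly k}}.

Definition trunc (N : nat) (f : pser k) : poly2 :=
  \poly_(a < N.+1) \poly_(b < N.+1) f a b.

Definition agree N (p : poly2) (f : pser k) :=
  forall a b, (a <= N)%N -> (b <= N)%N -> p`_a`_b = f a b.

Lemma agree_trunc N f : agree N (trunc N f) f.
Proof. by move=> a b Ha Hb; rewrite coef_poly ltnS Ha coef_poly ltnS Hb. Qed.

Lemma agree_mul N p q f g : agree N p f -> agree N q g -> agree N (p * q) (pmul f g).
Proof.
move=> Hp Hq i j Hi Hj; rewrite coefM coef_sum; apply: eq_bigr => a _.
rewrite coefM; apply: eq_bigr => b _.
by rewrite Hp ?Hq ?(leq_trans (leq_subr _ _)) ?(leq_trans (leq_ord _)).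
Qed.

Lemma agree_add N p q f g : agree N p f -> agree N q g -> agree N (p + q) (padd f g).
Proof. by move=> Hp Hq i j Hi Hj; rewrite !coefD Hp ?Hq. Qed.

Lemma agree_one N : agree N 1 (pone k).
Proof. by move=> [|i] j _ _; rewrite coefC //= ?coef0 // coefC; case: j. Qed.

(* A coefficient of a product only involves coefficients of smaller index, so the
   ring laws of k[[x,y]] are inherited from k[x][y] through truncations. *)
Lemma agree_eq (f g : pser k) :
  (forall N, exists2 p, agree N p f & agree N p g) -> f = g.
Proof.
move=> H; apply/funext => i; apply/funext => j.
have [p Hf Hg] := H (i + j)%N.
by rewrite -Hf ?leq_addr ?leq_addl // Hg ?leq_addr ?leq_addl.
Qed.

Lemma pmulA : associative (@pmul k).
Proof.
move=> f g h; apply: agree_eq => N.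
exists (trunc N f * (trunc N g * trunc N h)).
  by do ![apply: agree_mul | apply: agree_trunc].
by rewrite mulrA; do ![apply: agree_mul | apply: agree_trunc].
Qed.

Lemma pmulC : commutative (@pmul k).
Proof.
move=> f g; apply: agree_eq => N; exists (trunc N f * trunc N g).
  by apply: agree_mul; apply: agree_trunc.
by rewrite mulrC; apply: agree_mul; apply: agree_trunc.
Qed.

Lemma pmul1 : left_id (pone k) (@pmul k).
Proof.
move=> f; apply: agree_eq => N; exists (1 * trunc N f).
  by apply: agree_mul; [apply: agree_one | apply: agree_trunc].
by rewrite mul1r; apply: agree_trunc.
Qed.

Lemma pmulDl : left_distributive (@pmul k) (@padd k).
Proof.
move=> f g h; apply: agree_eq => N.
exists ((trunc N f + trunc N g) * trunc N h).
  by do ![apply: agree_mul | apply: agree_add | apply: agree_trunc].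
by rewrite mulrDl; do ![apply: agree_mul | apply: agree_add | apply: agree_trunc].
Qed.

Lemma paddA : associative (@padd k).
Proof. by move=> f g h; apply/funext => i; apply/funext => j; apply: addrA. Qed.

Lemma paddC : commutative (@padd k).
Proof. by move=> f g; apply/funext => i; apply/funext => j; apply: addrC. Qed.

Lemma padd0 : left_id (pzero k) (@padd k).
Proof. by move=> f; apply/funext => i; apply/funext => j; apply: add0r. Qed.

Lemma paddN : left_inverse (pzero k) (@popp k) (@padd k).
Proof. by move=> f; apply/funext => i; apply/funext => j; apply: addNr. Qed.

Lemma pone_neq0 : pone k != pzero k.
Proof. by apply/eqP => /(congr1 (fun f => f 0%N 0%N)) /eqP; rewrite oner_eq0. Qed.
End Truncation.

HB.instance Definition _ (k : fieldType) := gen_eqMixin (pser k).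
HB.instance Definition _ (k : fieldType) := gen_choiceMixin (pser k).
HB.instance Definition _ (k : fieldType) :=
  GRing.isZmodule.Build (pser k) (@paddA k) (@paddC k) (@padd0 k) (@paddN k).
HB.instance Definition _ (k : fieldType) :=
  GRing.Zmodule_isComNzRing.Build (pser k)
    (@pmulA k) (@pmulC k) (@pmul1 k) (@pmulDl k) (@pone_neq0 k).

Section Algebra.
Variable k : fieldType.

Definition pscale (c : k) (f : pser k) : pser k := fun i j => c * f i j.

Lemma pscaleA a b f : pscale a (pscale b f) = pscale (a * b) f.
Proof. by apply/funext => i; apply/funext => j; apply: mulrA. Qed.
Lemma pscale1 : left_id 1 pscale.
Proof. by move=> f; apply/funext => i; apply/funext => j; apply: mul1r. Qed.
Lemma pscaleDr : right_distributive pscale +%R.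
Proof. by move=> c f g; apply/funext => i; apply/funext => j; apply: mulrDr. Qed.
Lemma pscaleDl f : {morph pscale^~ f : a b / a + b}.
Proof. by move=> a b; apply/funext => i; apply/funext => j; apply: mulrDl. Qed.

HB.instance Definition _ :=
  GRing.Zmodule_isLmodule.Build k (pser k) pscaleA pscale1 pscaleDr pscaleDl.

Lemma pscaleAl (c : k) (f g : pser k) : c *: (f * g) = (c *: f) * g.
Proof.
apply/funext => i; apply/funext => j; change (c * pmul f g i j = pmul (pscale c f) g i j).
rewrite mulr_sumr; apply: eq_bigr => a _.
by rewrite mulr_sumr; apply: eq_bigr => b _; rewrite mulrA.
Qed.

HB.instance Definition _ := GRing.Lmodule_isLalgebra.Build k (pser k) pscaleAl.
HB.instance Definition _ := GRing.Lalgebra_isComAlgebra.Build k (pser k).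
End Algebra.

Section Coefficients.
Variable k : fieldType.
Local Notation X := (px k).
Local Notation Y := (py k).

Lemma agree_exp N p (f : pser k) m : agree N p f -> agree N (p ^+ m) (f ^+ m).
Proof.
move=> Hp; elim: m => [|m IH]; first exact: agree_one.
by rewrite !exprS; apply: agree_mul.
Qed.

Lemma agree_X N : agree N 'X X.
Proof. by move=> [|[|a]] [|b] _ _; rewrite coefX //= ?coefC ?coef0. Qed.

Lemma agree_Y N : agree N 'X%:P Y.
Proof. by move=> [|a] [|[|b]] _ _; rewrite coefC //= ?coef0 ?coefX. Qed.

Lemma coef_pxnM m (f : pser k) i j :
  (X ^+ m * f) i j = if (m <= i)%N then f (i - m)%N j else 0.
Proof.
have [Hi Hj] : (i <= i + j)%N /\ (j <= i + j)%N by rewrite leq_addr leq_addl.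
rewrite -[LHS](agree_mul (agree_exp m (@agree_X (i + j))) (@agree_trunc k (i + j) f) Hi Hj).
rewrite coefXnM ltnNge.
by case: leqP => _ /=; rewrite ?coef0 // agree_trunc // (leq_trans (leq_subr _ _)).
Qed.

Lemma coef_pynM m (f : pser k) i j :
  (Y ^+ m * f) i j = if (m <= j)%N then f i (j - m)%N else 0.
Proof.
have [Hi Hj] : (i <= i + j)%N /\ (j <= i + j)%N by rewrite leq_addr leq_addl.
rewrite -[LHS](agree_mul (agree_exp m (@agree_Y (i + j))) (@agree_trunc k (i + j) f) Hi Hj).
rewrite -rmorphXn coefCM coefXnM ltnNge.
by case: leqP => _ /=; rewrite ?coef0 // agree_trunc // (leq_trans (leq_subr _ _)).
Qed.

Lemma coef_pxM (f : pser k) i j : (X * f) i j = if i is i'.+1 then f i' j else 0.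
Proof. by rewrite -[X]expr1 coef_pxnM; case: i => //= i; rewrite subn1. Qed.

Lemma coef_pyM (f : pser k) i j : (Y * f) i j = if j is j'.+1 then f i j' else 0.
Proof. by rewrite -[Y]expr1 coef_pynM; case: j => //= j; rewrite subn1. Qed.

Lemma pser_split_const (f : pser k) :
  exists g h, f = (f 0%N 0%N)%:A + (X * g + Y * h).
Proof.
pose g : pser k := fun i j => f i.+1 j.
pose h : pser k := fun i j => if i == 0%N then f 0%N j.+1 else 0.
exists g, h; apply/funext => i; apply/funext => j.
change (f i j = f 0%N 0%N * pone k i j + ((X * g) i j + (Y * h) i j)).
rewrite coef_pxM coef_pyM.
by case: i => [|i]; case: j => [|j]; rewrite /= ?mulr1 ?mulr0 ?addr0 ?add0r.
Qed.

Lemma coef00M (f g : pser k) : (f * g) 0%N 0%N = f 0%N 0%N * g 0%N 0%N.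
Proof. by rewrite /GRing.mul /= /pmul !big_ord1. Qed.
End Coefficients.

Local Open Scope classical_set_scope.
Section LinearExtension.
Variables (K : fieldType) (V : lmodType K).

Definition linear_graph (G : set (V * K)) :=
  [/\ G (0, 0), (forall u a v b, G (u, a) -> G (v, b) -> G (u + v, a + b)),
      (forall c u a, G (u, a) -> G (c *: u, c * a)) &
      (forall u a b, G (u, a) -> G (u, b) -> a = b)].

Definition linear_functional (L : V -> K) :=
  {morph L : u v / u + v} /\ forall c u, L (c *: u) = c * L u.

Lemma linear_graph_chain (R : set (V * K)) (F : set (set (V * K))) :
  linear_graph R -> (forall X, F X -> linear_graph (X `|` R)) ->
  total_on F subset -> linear_graph (\bigcup_(X in F) X `|` R).
Proof.
move=> gR gF Ftot; pose U := \bigcup_(X in F) X `|` R.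
have common p q : U p -> U q ->
    exists2 Z, linear_graph Z & [/\ Z p, Z q & Z `<=` U].
  have sub X : F X -> X `|` R `<=` U by move=> FX r [Xr|Rr]; [left; exists X|right].
  case=> [[X FX Xp]|Rp] [[Y FY Yq]|Rq].
  - have [XY|YX] := Ftot X Y FX FY.
    + by exists (Y `|` R); [exact: gF | split; [left; apply: XY|left|exact: sub]].
    + by exists (X `|` R); [exact: gF | split; [left|left; apply: YX|exact: sub]].
  - by exists (X `|` R); [exact: gF | split; [left|right|exact: sub]].
  - by exists (Y `|` R); [exact: gF | split; [right|left|exact: sub]].
  - by exists R => //; split => //; right.
have [R0 _ _ _] := gR; split; first by right.
- move=> u a v b /common /[apply] -[Z [_ ZD _ _] [Zu Zv sZU]]; exact/sZU/ZD.
- by move=> c u a /[dup]/common/[apply] -[Z [_ _ ZZ _] [Zu _ sZU]]; exact/sZU/ZZ.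
- move=> u a b /common /[apply] -[Z [_ _ _ ZU] [Za Zb _]]; exact: ZU Za Zb.
Qed.

Lemma linear_graph_adjoin (G : set (V * K)) (v0 : V) :
  linear_graph G -> ~ (exists a, G (v0, a)) ->
  linear_graph [set p | exists w d c, G (w, d) /\ p = (w + c *: v0, d)].
Proof.
move=> [G0 GD GZ GU] v0G; split.
- by exists 0, 0, 0; rewrite scale0r addr0.
- move=> _ _ _ _ [w1 [d1 [c1 [G1 [-> ->]]]]] [w2 [d2 [c2 [G2 [-> ->]]]]].
  exists (w1 + w2), (d1 + d2), (c1 + c2); split; first exact: GD.
  by rewrite scalerDl addrACA.
- move=> c _ _ [w [d [c1 [Gw [-> ->]]]]]; exists (c *: w), (c * d), (c * c1).
  by split; [exact: GZ | rewrite scalerDr scalerA].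
- move=> _ a b [w1 [d1 [c1 [G1 [-> ->]]]]] [w2 [d2 [c2 [G2 [E ->]]]]].
  have [Ec|Nc] := eqVneq c1 c2.
    by move: E; rewrite Ec => /addIr Ew; rewrite Ew in G1; exact: GU G1 G2.
  exfalso; apply: v0G; exists ((c1 - c2)^-1 * (d2 - d1)).
  have Gdiff : G (w2 - w1, d2 - d1).
    by have := GD _ _ _ _ G2 (GZ (-1) _ _ G1); rewrite scaleN1r mulN1r.
  have -> : v0 = (c1 - c2)^-1 *: (w2 - w1).
    have -> : w2 = w1 + c1 *: v0 - c2 *: v0 by rewrite E addrK.
    by rewrite addrAC (addrAC w1) subrr add0r -scalerBl scalerA mulVf ?subr_eq0 ?scale1r.
  exact: GZ.
Qed.

Lemma linear_graph_extend (R : set (V * K)) : linear_graph R ->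
  exists2 L : V -> K, linear_functional L & forall u a, R (u, a) -> L u = a.
Proof.
move=> gR; pose P A := linear_graph (A `|` R).
have [A [gA Amax]] : exists A, P A /\ forall B, A `<` B -> ~ P B.
  by apply: Zorn_bigcup => F FP Ftot; apply: linear_graph_chain.
have [_ GD GZ GU] := gA; pose G := A `|` R.
have Gtot v : exists a, G (v, a).
  apply: contrapT => vG; pose B := [set p | exists w d c, G (w, d) /\ p = (w + c *: v, d)].
  have gB : linear_graph B := linear_graph_adjoin gA vG.
  apply: (Amax B); last first.
    by rewrite /P (_ : B `|` R = B) //; apply/setUidl => -[u a] Ru;
       exists u, a, 0; split; [right | rewrite scale0r addr0].
  split=> [[u a] Au|AB]; first by exists u, a, 0; split; [left | rewrite scale0r addr0].
  apply: vG; exists 0; left; apply: AB; exists 0, 0, 1.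
  by have [G0 _ _ _] := gA; split; rewrite ?scale1r ?add0r.
have [L LG] := choice Gtot.
exists L; first split.
- by move=> u v; apply: GU (LG _) (GD _ _ _ _ (LG u) (LG v)).
- by move=> c u; apply: GU (LG _) (GZ _ _ _ (LG u)).
by move=> u a Ru; apply: GU (LG _) (or_intror Ru).
Qed.
End LinearExtension.

Local Close Scope classical_set_scope.

Section ModuleTheory.
Variables (k : fieldType) (M : pmodule k).

Lemma pactA (a b : pser k) (m : M) : pact a (pact b m) = pact (a * b) m.
Proof. by rewrite pactM. Qed.

Lemma pactC (a b : pser k) (m : M) : pact a (pact b m) = pact b (pact a m).
Proof. by rewrite !pactA mulrC. Qed.

Lemma pact_addl (a b : pser k) (m : M) : pact (a + b) m = pact a m + pact b m.
Proof. exact: pactDl. Qed.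

Lemma pactr0 (a : pser k) : pact a (0 : M) = 0.
Proof. exact: additive_morph0 (pactDr a). Qed.

Lemma pactrB (a : pser k) (m n : M) : pact a (m - n) = pact a m - pact a n.
Proof. by rewrite pactDr (additive_morphN (pactDr a)). Qed.

Definition kspace : Type := M.
HB.instance Definition _ := GRing.Zmodule.on kspace.

Definition kscale (c : k) (m : kspace) : kspace := pact c%:A m.

Lemma kscaleA a b m : kscale a (kscale b m) = kscale (a * b) m.
Proof. by rewrite /kscale pactA mulr_algl scalerA. Qed.
Lemma kscale1 : left_id 1 kscale.
Proof. by move=> m; rewrite /kscale scale1r pact1. Qed.
Lemma kscaleDr : right_distributive kscale +%R.
Proof. by move=> c m n; rewrite /kscale pactDr. Qed.
Lemma kscaleDl m : {morph kscale^~ m : a b / a + b}.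
Proof. by move=> a b; rewrite /kscale scalerDl pact_addl. Qed.

HB.instance Definition _ :=
  GRing.Zmodule_isLmodule.Build k kspace kscaleA kscale1 kscaleDr kscaleDl.

Lemma pactZ (a : pser k) (c : k) (m : kspace) : pact a (c *: m) = c *: (pact a m : kspace).
Proof. exact: pactC. Qed.

Lemma pactZl (c : k) (a : pser k) (m : M) : pact (c *: a) m = c *: (pact a m : kspace).
Proof. by rewrite -mulr_algl -pactA. Qed.
End ModuleTheory.

Section Homomorphisms.
Variables (k : fieldType) (M N : pmodule k) (f : M -> N).
Hypothesis hom_f : is_hom f.

Lemma homD u v : f (u + v) = f u + f v.
Proof. by case: hom_f. Qed.
Lemma homA a u : f (pact a u) = pact a (f u).
Proof. by case: hom_f. Qed.
Lemma hom0 : f 0 = 0.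
Proof. exact: additive_morph0 homD. Qed.
Lemma homB u v : f (u - v) = f u - f v.
Proof. by rewrite homD (additive_morphN homD). Qed.
Lemma homZ c (u : kspace M) : f (c *: u) = c *: (f u : kspace N).
Proof. exact: homA. Qed.
End Homomorphisms.

Section LocalizationDual.
Variables (k : fieldType) (s : pser k).

(* The k-dual of the localization A_s: [ldval x n a] is the value of the
   functional x at a / s^n. *)
Record locdual := LocDual {
  ldval : nat -> pser k -> k;
  ldvalD : forall n a b, ldval n (a + b) = ldval n a + ldval n b;
  ldvalZ : forall n c a, ldval n (c *: a) = c * ldval n a;
  ldvalS : forall n a, ldval n a = ldval n.+1 (s * a) }.

Lemma locdual_ext (x y : locdual) : ldval x =2 ldval y -> x = y.
Proof.
case: x y => [fx Dx Zx Sx] [fy Dy Zy Sy] /= E.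
have Ef : fx = fy by apply/funext => n; apply/funext; apply: E.
by subst fy; congr LocDual; apply: Prop_irrelevance.
Qed.

Definition ld_zero : locdual.
Proof. by refine (@LocDual (fun _ _ => 0) _ _ _) => *; rewrite ?addr0 ?mulr0. Defined.

Definition ld_add (x y : locdual) : locdual.
Proof.
refine (@LocDual (fun n a => ldval x n a + ldval y n a) _ _ _) => n *.
- by rewrite !ldvalD addrACA.
- by rewrite !ldvalZ mulrDr.
- by rewrite -!ldvalS.
Defined.

Definition ld_opp (x : locdual) : locdual.
Proof.
refine (@LocDual (fun n a => - ldval x n a) _ _ _) => n *.
- by rewrite ldvalD opprD.
- by rewrite ldvalZ mulrN.
- by rewrite -ldvalS.
Defined.

Lemma ld_addA : associative ld_add.
Proof. by move=> x y z; apply: locdual_ext => n a /=; rewrite addrA. Qed.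
Lemma ld_addC : commutative ld_add.
Proof. by move=> x y; apply: locdual_ext => n a /=; rewrite addrC. Qed.
Lemma ld_add0 : left_id ld_zero ld_add.
Proof. by move=> x; apply: locdual_ext => n a /=; rewrite add0r. Qed.
Lemma ld_addN : left_inverse ld_zero ld_opp ld_add.
Proof. by move=> x; apply: locdual_ext => n a /=; rewrite addNr. Qed.

HB.instance Definition _ := gen_eqMixin locdual.
HB.instance Definition _ := gen_choiceMixin locdual.
HB.instance Definition _ := GRing.isZmodule.Build locdual ld_addA ld_addC ld_add0 ld_addN.

Definition ld_act (b : pser k) (x : locdual) : locdual.
Proof.
refine (@LocDual (fun n a => ldval x n (a * b)) _ _ _) => n *.
- by rewrite mulrDl ldvalD.
- by rewrite -scalerAl ldvalZ.
- by rewrite ldvalS mulrA.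
Defined.

Lemma ld_act1 x : ld_act (pone k) x = x.
Proof. by apply: locdual_ext => n a /=; rewrite (mulr1 (a : pser k)). Qed.
Lemma ld_actM a b x : ld_act (pmul a b) x = ld_act a (ld_act b x).
Proof. by apply: locdual_ext => n c /=; rewrite (mulrA c a b). Qed.
Lemma ld_actDl a b x : ld_act (padd a b) x = ld_act a x + ld_act b x.
Proof. by apply: locdual_ext => n c /=; rewrite (mulrDr c a b) ldvalD. Qed.
Lemma ld_actDr a x y : ld_act a (x + y) = ld_act a x + ld_act a y.
Proof. by apply: locdual_ext. Qed.

Definition J : pmodule k := PModule ld_act1 ld_actM ld_actDl ld_actDr.

Lemma ldval_act b (x : J) n a : ldval (pact b x) n a = ldval x n (a * b).
Proof. by []. Qed.

Lemma J_act_inj p t : s = p * t -> forall x : J, pact p x = 0 -> x = 0.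
Proof.
move=> Es x px0; apply: locdual_ext => n a; rewrite ldvalS Es.
by rewrite -mulrA mulrC -ldval_act px0.
Qed.
End LocalizationDual.

Section CompatibleFamilies.
Variables (k : fieldType) (s : pser k) (M : pmodule k).

(* Compatible families are the A-linear maps into J s, i.e. the k-linear
   functionals on the localization M_s (hom_of_compatible, compatible_of_hom). *)
Definition compatible (L : nat -> kspace M -> k) :=
  (forall m, linear_functional (L m)) /\ forall m v, L m.+1 (pact s v) = L m v.

Lemma compatible_shift L : compatible L ->
  forall m t v, L m v = L (m + t)%N (pact (s ^+ t) v).
Proof.
move=> [_ LS] m t v; elim: t => [|t IH]; first by rewrite addn0 expr0 pact1.
by rewrite IH -LS exprS -pactA addnS.
Qed.

Lemma compatible_of_hom (h : M -> J s) : is_hom h ->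
  compatible (fun m v => ldval (h v) m 1).
Proof.
move=> hom_h; split=> [m|m v]; first split.
- by move=> u v; rewrite (homD hom_h) /=.
- move=> c u; rewrite (homZ hom_h); change (ldval (pact c%:A (h u)) m 1 = c * ldval (h u) m 1).
  by rewrite ldval_act mul1r ldvalZ.
by rewrite (homA hom_h) ldval_act mul1r (ldvalS _ m) mulr1.
Qed.

Variables (L : nat -> kspace M -> k) (compat_L : compatible L).

Definition hom_of_compatible (v : M) : J s.
Proof.
refine (@LocDual k s (fun m a => L m (pact a v)) _ _ _) => m *.
- by rewrite pact_addl (compat_L.1 m).1.
- by rewrite pactZl (compat_L.1 m).2.
- by rewrite -pactA compat_L.2.
Defined.

Lemma hom_of_compatible_is_hom : is_hom hom_of_compatible.
Proof.
split=> [u v|a u]; apply: locdual_ext => m b /=; last by rewrite pactA mulrC.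
by rewrite pactDr (compat_L.1 m).1.
Qed.
End CompatibleFamilies.

Section ExtendCompatible.
Variables (k : fieldType) (s : pser k) (N N' : pmodule k) (i : N -> N').
Hypotheses (hom_i : is_hom i) (inj_i : injective i).
Variables (lam : nat -> kspace N -> k) (compat_lam : compatible s lam).

Let lamD m : {morph lam m : u v / u + v}. Proof. exact: (compat_lam.1 m).1. Qed.
Let lamZ m c u : lam m (c *: u) = c * lam m u. Proof. exact: (compat_lam.1 m).2. Qed.
Let lam0 m : lam m 0 = 0. Proof. exact: additive_morph0 (lamD m). Qed.
Let lam_shift := compatible_shift compat_lam.
Let lamB m u v : lam m (u - v) = lam m u - lam m v.
Proof. by rewrite lamD (additive_morphN (lamD m)). Qed.

Definition extends_at m (L : kspace N' -> k) :=
  linear_functional L /\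
  forall (v : kspace N') (n : kspace N) t, pact (s ^+ t) v = i n -> L v = lam (m + t)%N n.

Local Open Scope classical_set_scope.

Lemma extends_at0 : exists L, extends_at 0 L.
Proof.
pose R := [set p : kspace N' * k |
  exists (n : kspace N) t, pact (s ^+ t) p.1 = i n /\ p.2 = lam t n].
have [|L linL LR] := @linear_graph_extend k _ R.
  split.
  - by exists 0, 0%N; rewrite pact1 (hom0 hom_i) lam0.
  - move=> u a v b [n1 [t1 [/= E1 ->]]] [n2 [t2 [/= E2 ->]]].
    exists (pact (s ^+ t2) n1 + pact (s ^+ t1) n2), (t1 + t2)%N; split => /=.
      by rewrite pactDr (homD hom_i) !(homA hom_i) -E1 -E2 !pactA -!exprD addnC.
    by rewrite lamD -lam_shift addnC -lam_shift.
  - move=> c u a [n [t [/= E ->]]]; exists (c *: n), t; split; last by rewrite lamZ.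
    by rewrite pactZ /= E (homZ hom_i).
  - move=> u a b [n1 [t1 [/= E1 ->]]] [n2 [t2 [/= E2 ->]]].
    have : i (pact (s ^+ t2) n1) = i (pact (s ^+ t1) n2).
      by rewrite !(homA hom_i) -E1 -E2 !pactA -!exprD addnC.
    by move/inj_i => E; rewrite (lam_shift _ t2) E addnC -lam_shift.
by exists L; split => // v n t E; apply: LR; exists n, t.
Qed.

Lemma extends_at_succ m L : extends_at m L ->
  exists2 L', extends_at m.+1 L' & forall v, L' (pact s v) = L v.
Proof.
move=> [linL Llam]; have [LD LZ] := linL; have L0 := additive_morph0 LD.
have LB u v : L (u - v) = L u - L v by rewrite LD (additive_morphN LD).
(* L' is prescribed on s N' by L, and on the elements that s^t brings into i N by lam. *)
pose R := [set p : kspace N' * k | exists (w : kspace N') (n : kspace N) t,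
  pact (s ^+ t) (p.1 - pact s w) = i n /\ p.2 = L w + lam (m.+1 + t) n].
have [|L' linL' L'R] := @linear_graph_extend k _ R.
  split.
  - by exists 0, 0, 0%N; rewrite pactr0 subr0 pactr0 (hom0 hom_i) L0 lam0 addr0.
  - move=> u a v b [w1 [n1 [t1 [/= E1 ->]]]] [w2 [n2 [t2 [/= E2 ->]]]].
    exists (w1 + w2), (pact (s ^+ t2) n1 + pact (s ^+ t1) n2), (t1 + t2)%N; split => /=.
      rewrite (homD hom_i) !(homA hom_i) -E1 -E2 !pactA -!exprD addnC -pactDr.
      by congr pact; rewrite pactDr opprD addrACA.
    rewrite LD lamD (lam_shift (m.+1 + t1) t2) (lam_shift (m.+1 + t2) t1) -!addnA (addnC t1).
    by rewrite addrACA.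
  - move=> c u a [w [n [t [/= E ->]]]]; exists (c *: w), (c *: n), t; split.
      by rewrite /= pactZ -scalerBr pactZ E (homZ hom_i).
    by rewrite LZ lamZ mulrDr.
  - move=> u a b [w1 [n1 [t1 [/= E1 ->]]]] [w2 [n2 [t2 [/= E2 ->]]]].
    have Ew : pact (s ^+ (t1 + t2).+1) (w1 - w2) = i (pact (s ^+ t1) n2 - pact (s ^+ t2) n1).
      have -> : pact (s ^+ (t1 + t2).+1) (w1 - w2)
                = pact (s ^+ (t1 + t2)) ((u - pact s w2) - (u - pact s w1)).
        by rewrite exprSr -pactA pactrB opprB [(u - _) + _]addrC addrA subrK.
      rewrite pactrB {1}exprD addnC exprD -!pactA E1 E2.
      by rewrite (homB hom_i) !(homA hom_i).
    have shift t t' n : lam (m + (t + t').+1) (pact (s ^+ t) n) = lam (m.+1 + t') n.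
      by rewrite (lam_shift (m.+1 + t') t); congr lam; lia.
    have := Llam _ _ _ Ew; rewrite LB lamB (shift t1 t2) (addnC t1) (shift t2 t1) => E.
    by rewrite -[L w1](subrK (L w2)) E; ring.
exists L'; first split => // v n t E.
  apply: L'R; exists 0, n, t; split; first by rewrite pactr0 subr0.
  by rewrite L0 add0r.
by move=> v; apply: L'R; exists v, 0, 0%N; rewrite subrr pactr0 (hom0 hom_i) lam0 addr0.
Qed.

Lemma compatible_extend :
  exists2 Lam, compatible s Lam & forall m n, Lam m (i n) = lam m n.
Proof.
have [Lam HLam] := dependent_choice_nat extends_at0 extends_at_succ.
exists Lam; first by split=> m; [exact: (HLam m).1.1 | exact: (HLam m).2].
by move=> m n; rewrite ((HLam m).1.2 _ n 0%N) ?addn0 // expr0 pact1.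
Qed.
End ExtendCompatible.

Lemma J_injective (k : fieldType) (s : pser k) : injective_module (J s).
Proof.
move=> N N' i h hom_i inj_i hom_h.
have [Lam compat_Lam LamE] := compatible_extend hom_i inj_i (compatible_of_hom hom_h).
exists (hom_of_compatible compat_Lam); split; first exact: hom_of_compatible_is_hom.
move=> n; apply: locdual_ext => m a /=.
by rewrite -(homA hom_i) LamE (homA hom_h) ldval_act mul1r.
Qed.

Section Product.
Variables (k : fieldType) (M1 M2 : pmodule k).

Definition pair_act (a : pser k) (p : (M1 * M2)%type) : (M1 * M2)%type :=
  (pact a p.1, pact a p.2).

Lemma pair_act1 p : pair_act (pone k) p = p.
Proof. by case: p => u v; rewrite /pair_act !pact1. Qed.
Lemma pair_actM a b p : pair_act (pmul a b) p = pair_act a (pair_act b p).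
Proof. by rewrite /pair_act !pactM. Qed.
Lemma pair_actDl a b p : pair_act (padd a b) p = pair_act a p + pair_act b p.
Proof. by rewrite /pair_act !pactDl. Qed.
Lemma pair_actDr a p q : pair_act a (p + q) = pair_act a p + pair_act a q.
Proof. by rewrite /pair_act /= !pactDr. Qed.

Definition prod_pmodule : pmodule k :=
  PModule pair_act1 pair_actM pair_actDl pair_actDr.

Lemma prod_injective :
  injective_module M1 -> injective_module M2 -> injective_module prod_pmodule.
Proof.
move=> inj1 inj2 N N' i h hom_i inj_i hom_h.
have hom_h1 : is_hom (fun n => (h n).1 : M1).
  by split=> [u v|a u]; rewrite ?(homD hom_h) ?(homA hom_h).
have hom_h2 : is_hom (fun n => (h n).2 : M2).
  by split=> [u v|a u]; rewrite ?(homD hom_h) ?(homA hom_h).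
have [g1 [hom_g1 E1]] := inj1 N N' i _ hom_i inj_i hom_h1.
have [g2 [hom_g2 E2]] := inj2 N N' i _ hom_i inj_i hom_h2.
exists (fun n => (g1 n, g2 n) : prod_pmodule); split; first split.
- by move=> u v; rewrite (homD hom_g1) (homD hom_g2).
- by move=> a u; rewrite (homA hom_g1) (homA hom_g2).
by move=> n; rewrite E1 E2; case: (h n).
Qed.
End Product.

Section PuncturedSpectrum.
Variable k : fieldType.
Local Notation X := (px k).
Local Notation Y := (py k).

Lemma maxidealP (f : pser k) : maxideal f <-> f 0%N 0%N = 0.
Proof.
split=> [[g [h ->]]|f0].
  by change ((X * g) 0%N 0%N + (Y * h) 0%N 0%N = 0); rewrite coef_pxM coef_pyM addr0.
by have [g [h Ef]] := pser_split_const f; exists g, h; rewrite {1}Ef f0 scale0r add0r.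
Qed.

Lemma prime_ideal_coef00 : prime_ideal (fun f : pser k => f 0%N 0%N = 0).
Proof.
split; first split; [by [] | split; [|split] | split].
- by move=> f g f0 g0; rewrite /padd f0 g0 addr0.
- by move=> f f0; rewrite /popp f0 oppr0.
- by move=> a f f0; rewrite -[pmul a f]/(a * f) coef00M f0 mulr0.
- by move/eqP; rewrite oner_eq0.
move=> a b; rewrite -[pmul a b]/(a * b) coef00M => /eqP.
by rewrite mulf_eq0 => /orP[] /eqP; auto.
Qed.

Definition socle_free (M : pmodule k) :=
  forall v : M, pact X v = 0 -> pact Y v = 0 -> v = 0.

Section Socle.
Variables (M : pmodule k) (w : M).
Hypotheses (Xw : pact X w = 0) (Yw : pact Y w = 0) (w_neq0 : w <> 0).

Lemma pact_socle a : pact a w = (a 0%N 0%N) *: (w : kspace M).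
Proof.
have [g [h Ea]] := pser_split_const a.
by rewrite {1}Ea !pact_addl (mulrC X) (mulrC Y) -!pactA Xw Yw !pactr0 !addr0.
Qed.

Lemma ann_socle a : pact a w = 0 <-> a 0%N 0%N = 0.
Proof.
rewrite pact_socle; change (a 0%N 0%N *: (w : kspace M) = 0 <-> a 0%N 0%N = 0).
split=> [|->]; last by rewrite scale0r.
move/eqP; rewrite scaler_eq0 => /orP[/eqP //|/eqP w0].
by case: w_neq0.
Qed.

Lemma Ass_socle : Ass M (fun a => pact a w = 0).
Proof.
split; last by exists w.
rewrite (_ : (fun a => _) = fun a => a 0%N 0%N = 0); first exact: prime_ideal_coef00.
by apply/funext => a; apply/propext; exact: ann_socle.
Qed.
End Socle.

Lemma Ass_socle_free (M : pmodule k) (P : pser k -> Prop) :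
  socle_free M -> Ass M P -> Phi_punctured P.
Proof.
move=> free_M [prime_P [m Pm]]; split=> // PE.
have m0 : m = 0 by apply: free_M; apply/Pm/PE/maxidealP.
have : maxideal (pone k) by apply/PE/Pm; rewrite m0 pactr0.
by move/maxidealP/eqP; rewrite oner_eq0.
Qed.

Lemma in_Inj_socle_free (M : pmodule k) :
  injective_module M -> socle_free M -> in_Inj (@Phi_punctured k) M.
Proof. by move=> inj_M free_M; split=> // P; exact: Ass_socle_free. Qed.
End PuncturedSpectrum.

Section Comap.
Variables (k : fieldType) (s t u : pser k).
Hypothesis (Eu : u = s * t).

(* Dual to the localization map A_s -> A_u, a / s^m |-> a t^m / u^m. *)
Definition ld_comap (psi : J u) : J s.
Proof.
refine (@LocDual k s (fun m a => ldval psi m (t ^+ m * a)) _ _ _) => m *.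
- by rewrite mulrDr ldvalD.
- by rewrite -scalerAr ldvalZ.
- by rewrite ldvalS; congr ldval; rewrite Eu exprS; ring.
Defined.

Lemma ld_comap_hom : is_hom ld_comap.
Proof.
by split=> [psi phi|a psi]; apply: locdual_ext => m b //=; rewrite mulrA.
Qed.
End Comap.

Section Counterexample.
Variable k : fieldType.
Local Notation X := (px k).
Local Notation Y := (py k).
Local Notation I0 := (J (X * Y)).
Local Notation I1 := (prod_pmodule (J X) (J Y)).

Definition comap_pair (psi : I0) : I1 :=
  (ld_comap (erefl (X * Y)) psi, ld_comap (mulrC X Y) psi).

Lemma comap_pair_hom : is_hom comap_pair.
Proof.
split=> [psi phi|a psi]; congr pair;
  by rewrite ?(homD (ld_comap_hom _)) ?(homA (ld_comap_hom _)).
Qed.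

Definition coef_x : J X.
Proof.
refine (@LocDual k X (fun m a => a m 0%N) _ _ _) => //= m *.
by rewrite coef_pxM.
Defined.

Definition coef_xy : I0.
Proof.
refine (@LocDual k (X * Y) (fun m a => if m is m'.+1 then a m' m else 0) _ _ _).
- by case=> [|n] a b; rewrite ?addr0.
- by case=> [|n] c a; rewrite ?mulr0.
- by case=> [|n] a; rewrite -mulrA coef_pxM ?coef_pyM.
Defined.

Let u : I1 := (coef_x, 0).

Lemma u_notin_image psi : comap_pair psi <> u.
Proof.
move=> E; have /= := congr1 (fun p => ldval p.1 0%N 1) E.
have /= -> := congr1 (fun p => ldval p.2 0%N 1) E.
by change ((0 : k) = 1 -> False); move/esym/eqP; rewrite oner_eq0.
Qed.

Lemma Xu_in_image : comap_pair coef_xy = pact X u.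
Proof.
congr pair; apply: locdual_ext => -[|m] a //=.
- by rewrite [a * X]mulrC coef_pxM.
- by rewrite [a * X]mulrC coef_pxM coef_pynM leqnn subnn.
- by rewrite coef_pxnM ltnn.
Qed.

Lemma Yu_in_image : comap_pair 0 = pact Y u.
Proof.
congr pair; apply: locdual_ext => m a //=.
by rewrite [a * Y]mulrC coef_pyM.
Qed.

Lemma I0_in_Inj : in_Inj (@Phi_punctured k) I0.
Proof.
apply: in_Inj_socle_free; first exact: J_injective.
by move=> v Xv _; exact: (J_act_inj (t := Y) erefl Xv).
Qed.

Lemma I1_in_Inj : in_Inj (@Phi_punctured k) I1.
Proof.
apply: in_Inj_socle_free; first by apply: prod_injective; exact: J_injective.
move=> [v w] /(congr1 fst) /= Xv /(congr1 snd) /= Yw.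
by rewrite (J_act_inj (esym (mulr1 X)) Xv) (J_act_inj (esym (mulr1 Y)) Yw).
Qed.
End Counterexample.

Theorem mainTheorem7 (k : fieldType) :
  ~ coherent (@Phi_punctured k).
Proof.
move=> coh.
have [I2 [g [[_ AssI2] [hom_g exact_g]]]] :=
  coh _ _ _ (@I0_in_Inj k) (@I1_in_Inj k) (@comap_pair_hom k).
pose w := g (coef_x k, 0).
have w_neq0 : w <> 0 by move/exact_g => [psi]; exact: u_notin_image.
have Xw : pact (px k) w = 0.
  by rewrite -(homA hom_g); apply/exact_g; exists (coef_xy k); exact: Xu_in_image.
have Yw : pact (py k) w = 0.
  by rewrite -(homA hom_g); apply/exact_g; exists 0; exact: Yu_in_image.
have [_] := AssI2 _ (Ass_socle Xw Yw w_neq0).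
by apply=> a; rewrite maxidealP; exact: ann_socle.
Qed.
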